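(* Let $(X,d^\star)$ be a totally bounded $\star$-metric space. Then for every subset $M\subseteq X$, the $\star$-metric space $(M,d^\star|_{M\times M})$ is totally bounded.
   Context: A $t$-definer is a function $\star:[0,\infty)\times[0,\infty)\to[0,\infty)$ such that for all $a,b,c\ge 0$: $a\star b=b\star a$; $a\star(b\star c)=(a\star b)\star c$; if $a\le b$ then $a\star c\le b\star c$; $a\star 0=a$; and $\star$ is continuous in its first variable with respect to the Euclidean topology. Given a nonempty set $X$ and a $t$-definer $\star$, a $\star$-metric on $X$ is a function $d^\star:X\times X\to[0,\infty)$ such that for all $x,y,z\in X$: $d^\star(x,y)=0$ iff $x=y$; $d^\star(x,y)=d^\star(y,x)$; and $d^\star(x,y)\le d^\star(x,z)\star d^\star(z,y)$; $(X,d^\star)$ is a $\star$-metric space. Put $B_{d^\star}(a,r)=\{x\in X: d^\star(a,x)<r\}$. $(X,d^\star)$ is totally bounded if for every $\epsilon>0$ there is a finite set $F\subseteq X$ with $X=\bigcup_{x\in F}B_{d^\star}(x,\epsilon)$. For a subset $M$, the restriction of $d^\star$ to $M\times M$ is a $\star$-metric on $M$, and total boundedness of $(M,d^\star|_{M\times M})$ uses balls and finite sets within $M$. *)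

From Stdlib Require Import Reals List.
Open Scope R_scope.

(* A t-definer: an operation on [0,oo).  We model it as a function R -> R -> R
   whose properties are only required on nonnegative arguments, and which maps
   nonnegative arguments to nonnegative values. *)
Definition t_definer (star : R -> R -> R) : Prop :=
  (forall a b, 0 <= a -> 0 <= b -> 0 <= star a b) /\
  (forall a b, 0 <= a -> 0 <= b -> star a b = star b a) /\
  (forall a b c, 0 <= a -> 0 <= b -> 0 <= c ->
      star a (star b c) = star (star a b) c) /\
  (forall a b c, 0 <= a -> 0 <= b -> 0 <= c -> a <= b -> star a c <= star b c) /\
  (forall a, 0 <= a -> star a 0 = a) /\
  (forall b, 0 <= b ->
     forall a, 0 <= a -> forall eps, 0 < eps -> exists delta, 0 < delta /\
       forall x, 0 <= x -> Rabs (x - a) < delta -> Rabs (star x b - star a b) < eps).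

Definition star_metric {X : Type} (star : R -> R -> R) (d : X -> X -> R) : Prop :=
  (forall x y, 0 <= d x y) /\
  (forall x y, d x y = 0 <-> x = y) /\
  (forall x y, d x y = d y x) /\
  (forall x y z, d x y <= star (d x z) (d z y)).

Definition ball {X : Type} (d : X -> X -> R) (a : X) (r : R) : X -> Prop :=
  fun x => d a x < r.

Definition totally_bounded {X : Type} (d : X -> X -> R) : Prop :=
  forall eps, 0 < eps -> exists F : list X,
    forall y : X, exists x, In x F /\ ball d x eps y.

Definition restrict {X : Type} (M : X -> Prop) (d : X -> X -> R)
  : {x | M x} -> {x | M x} -> R :=
  fun x y => d (proj1_sig x) (proj1_sig y).

(* Continuity of the t-definer at 0, together with [a * 0 = a], gives a radius
   r > 0 such that [a * b < eps] whenever [a, b < r].  Cover X by finitely many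
   r-balls and keep, for each centre whose ball meets M, one point of M in it:
   by the star-triangle inequality through the centre, these points form a
   finite eps-net of M. *)

From Stdlib Require Import Reals List Lra Classical.
Open Scope R_scope.

Lemma t_definer_mono_r (star : R -> R -> R) : t_definer star ->
  forall a b c, 0 <= a -> 0 <= b -> 0 <= c -> b <= c -> star a b <= star a c.
Proof.
  intros [_ [Hcomm [_ [Hmono _]]]] a b c Ha Hb Hc Hbc.
  rewrite (Hcomm a b), (Hcomm a c) by assumption.
  now apply Hmono.
Qed.

Lemma t_definer_small_near_zero (star : R -> R -> R) : t_definer star ->
  forall eps, 0 < eps -> exists r, 0 < r /\
    forall a b, 0 <= a < r -> 0 <= b < r -> star a b < eps.
Proof.
  intros Hstar eps Heps.
  pose proof Hstar as [Hnn [Hcomm [_ [_ [Hid Hcont]]]]].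
  destruct (Hcont (eps / 2) ltac:(lra) 0 (Rle_refl 0) (eps / 2) ltac:(lra))
    as [delta [Hdelta Hclose]].
  assert (Hzero : star 0 (eps / 2) = eps / 2).
  { rewrite Hcomm by lra. apply Hid. lra. }
  exists (Rmin delta (eps / 2)). split.
  - apply Rmin_glb_lt; lra.
  - intros a b [Ha Har] [Hb Hbr].
    pose proof (Rmin_l delta (eps / 2)). pose proof (Rmin_r delta (eps / 2)).
    assert (Hnear : Rabs (star a (eps / 2) - star 0 (eps / 2)) < eps / 2).
    { apply Hclose; [assumption|]. rewrite Rminus_0_r, Rabs_pos_eq; lra. }
    rewrite Hzero in Hnear. apply Rabs_def2 in Hnear.
    pose proof (t_definer_mono_r star Hstar a b (eps / 2) Ha Hb ltac:(lra) ltac:(lra)).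
    lra.
Qed.

Lemma list_choice {A B : Type} (P : B -> A -> Prop) (F : list B) :
  exists G : list A, forall c, In c F -> (exists a, P c a) ->
    exists a, In a G /\ P c a.
Proof.
  induction F as [|c F [G HG]].
  - exists nil. intros c [].
  - destruct (classic (exists a, P c a)) as [[a Ha]|Hnone].
    + exists (a :: G). intros c' [<-|Hin] Hex.
      * exists a. split; [left|]; trivial.
      * destruct (HG c' Hin Hex) as [g [Hg HPg]]. exists g. split; [right|]; trivial.
    + exists G. intros c' [<-|Hin] Hex.
      * contradiction.
      * exact (HG c' Hin Hex).
Qed.

Theorem theorem3p4 (X : Type) (star : R -> R -> R) (d : X -> X -> R)
  (x0 : X)
  (Hstar : t_definer star) (Hd : star_metric star d)
  (Htb : totally_bounded d) (M : X -> Prop) :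
  totally_bounded (restrict M d).
Proof.
  destruct Hd as [Hdnn [_ [Hsym Htri]]].
  intros eps Heps.
  destruct (t_definer_small_near_zero star Hstar eps Heps) as [r [Hr Hsmall]].
  destruct (Htb r Hr) as [F HF].
  destruct (list_choice (fun c (m : {x | M x}) => d c (proj1_sig m) < r) F)
    as [G HG].
  exists G. intros y.
  destruct (HF (proj1_sig y)) as [c [Hc Hcy]].
  destruct (HG c Hc (ex_intro _ y Hcy)) as [g [Hg Hgc]].
  exists g. split; [exact Hg|].
  unfold ball, restrict.
  eapply Rle_lt_trans; [apply (Htri _ _ c)|].
  rewrite Hsym. apply Hsmall; split; auto.
Qed.
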